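(* Let $p$ be a prime and let $P$ be a finite $p$-group which can be generated by at most two elements. Let $f$ be a prime power such that $\mathrm{PSL}(2,f)$ is a non-abelian simple group, and suppose $\mathrm{PSL}(2,f)$ acts on $P$ via automorphisms. Then the action of $\mathrm{PSL}(2,f)$ on $P$ is trivial. *)

From HB Require Import structures.
From mathcomp Require Import all_boot all_order all_algebra all_fingroup all_solvable.
Set Implicit Arguments. Unset Strict Implicit. Unset Printing Implicit Defensive.
Import GRing.Theory.
Local Open Scope ring_scope.

Definition SL2 (F : finFieldType) : {set {'GL_2[F]}} :=
  [set g : {'GL_2[F]} | \det (GLval g) == 1].

Lemma SL2_group_set (F : finFieldType) : group_set (SL2 F).
Proof.
apply/group_setP; split.
  by rewrite inE GL_1E det1.
move=> x y; rewrite !inE => /eqP dx /eqP dy.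
by rewrite GL_ME det_mulmx dx dy mulr1.
Qed.

Canonical SL2_group (F : finFieldType) := Group (SL2_group_set F).

Definition PSL2 (F : finFieldType) : {set coset_of 'Z(SL2 F)} :=
  (SL2 F / 'Z(SL2 F))%g.
Canonical PSL2_group (F : finFieldType) : {group coset_of 'Z(SL2 F)} :=
  Eval hnf in [group of PSL2 F].

(* The kernel of the action is a normal subgroup of the simple group PSL(2,f),
   so it suffices to rule out a faithful action, which we realise inside a
   semidirect product as A acting on P. A still acts faithfully on the Frattini
   quotient P/Phi(P): otherwise it acts trivially there by simplicity, and since
   an element of prime order q <> p acting trivially on P/Phi(P) acts trivially
   on P (coprime action), A would be a p-group. As P is 2-generated, P/Phi(P)
   has dimension at most 2 over F_p, so A embeds in GL(2,p). For p = 2 this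
   group has order 6, too small for a non-abelian simple group. For p odd, A is
   perfect and hence lies in SL(2,p), whose only involution is -1; so the
   involution of PSL(2,f), the image of [[0,1],[-1,0]], would be central in A. *)

From HB Require Import structures.
From mathcomp Require Import all_boot all_order all_algebra all_fingroup all_solvable.
From mathcomp Require Import mxrepresentation mxabelem integral_char.
From mathcomp Require Import ring.

Set Implicit Arguments. Unset Strict Implicit. Unset Printing Implicit Defensive.

Import GRing.Theory.

Section TwoByTwoMatrices.
Local Open Scope ring_scope.

Lemma ord2_cases (i : 'I_2) : i = 0 \/ i = 1.
Proof. by case: i => [[|[|//]] ?]; [left | right]; apply: val_inj. Qed.

Lemma det_mx2 (R : comNzRingType) (M : 'M[R]_2) :
  \det M = M 0 0 * M 1 1 - M 0 1 * M 1 0.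
Proof.
rewrite (expand_det_row M 0) !big_ord_recl big_ord0 addr0 /cofactor !det_mx11.
have lift01 : lift 0 (0 : 'I_1) = 1 :> 'I_2 by apply: val_inj.
have lift10 : lift 1 (0 : 'I_1) = 0 :> 'I_2 by apply: val_inj.
by rewrite !mxE /= lift01 lift10 expr0 expr1 mul1r mulN1r mulrN.
Qed.

Lemma mulmx2E (R : nzRingType) (A B : 'M[R]_2) i j :
  (A *m B) i j = A i 0 * B 0 j + A i 1 * B 1 j.
Proof.
rewrite mxE !big_ord_recl big_ord0 addr0.
by have -> : lift ord0 (ord0 : 'I_1) = 1 :> 'I_2 by apply: val_inj.
Qed.

Lemma det1_involution_scalar (F : fieldType) (M : 'M[F]_2) :
  2%:R != 0 :> F -> \det M = 1 -> M *m M = 1%:M -> exists c, M = c%:M.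
Proof.
move=> nz2 detM MM.
have sq i j : M i 0 * M 0 j + M i 1 * M 1 j = (i == j)%:R.
  by rewrite -mulmx2E MM mxE.
have := sq 0 0; have := sq 0 1; have := sq 1 0; have := sq 1 1; rewrite /= ?mulr1n ?mulr0n.
rewrite det_mx2 in detM.
set a := M 0 0 in detM *; set b := M 0 1 in detM *.
set c := M 1 0 in detM *; set d := M 1 1 in detM *.
move=> sq11 sq10 sq01 sq00.
have trM : a + d != 0.
  apply: contraNneq nz2 => trM0.
  have -> : 2%:R = (a * a + b * c) + (a * d - b * c) :> F by rewrite sq00 detM.
  by rewrite -(mulr0 a) -trM0; apply/eqP; ring.
have b0 : b = 0.
  by apply/eqP; move/eqP: sq01; rewrite mulrC -mulrDr mulf_eq0 (negbTE trM) orbF.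
have c0 : c = 0.
  by apply/eqP; move/eqP: sq10; rewrite [d * c]mulrC -mulrDr mulf_eq0 (negbTE trM) orbF.
rewrite b0 c0 !mul0r !subr0 ?addr0 ?add0r in detM sq11.
have ad : a = d by rewrite -[a]mulr1 -sq11 mulrA detM mul1r.
exists a; apply/matrixP => i j; rewrite !mxE.
by case: (ord2_cases i) => ->; case: (ord2_cases j) => -> //=; rewrite -/b -/c -/d ?b0 ?c0 ?ad.
Qed.

End TwoByTwoMatrices.

Section FaithfulRepresentations.
Local Open Scope ring_scope.
Variables (F : fieldType) (gT : finGroupType) (G : {group gT}).

Lemma mx_faithful_dim1_abelian (rG : mx_representation F G 1) :
  mx_faithful rG -> abelian G.
Proof.
move=> ffG; apply/centsP => x Gx y Gy; apply: (mx_faithful_inj ffG); rewrite ?groupM //.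
by rewrite !repr_mxM // [rG x]mx11_scalar [rG y]mx11_scalar -!scalar_mxM mulrC.
Qed.

Lemma repr_det_der1 n (rG : mx_representation F G n) g :
  g \in G^`(1)%g -> \det (rG g) = 1.
Proof.
pose D := [set x in G | \det (rG x) == 1].
have groupD : group_set D.
  apply/group_setP; split; first by rewrite inE group1 repr_mx1 det1 eqxx.
  move=> x y; rewrite !inE => /andP[Gx /eqP dx] /andP[Gy /eqP dy].
  by rewrite groupM // repr_mxM // det_mulmx dx dy mulr1 eqxx.
suff /subsetP/(_ g) : (G^`(1) \subset Group groupD)%g by rewrite inE => /[apply]/andP[_ /eqP].
rewrite derg1 gen_subG; apply/subsetP => _ /imset2P[x y Gx Gy ->].
have det_neq0 z : z \in G -> \det (rG z) != 0.
  by move=> Gz; rewrite -unitfE -unitmxE repr_mx_unit.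
rewrite inE groupR //= /commg /conjg !repr_mxM ?groupM ?groupV // !repr_mxV //.
by rewrite !det_mulmx !det_inv mulrCA mulKf ?mulVf ?det_neq0.
Qed.

Lemma perfect_repr2_involution_center (rG : mx_representation F G 2) t :
    2%:R != 0 :> F -> mx_faithful rG -> G^`(1)%g = G ->
  t \in G -> (t ^+ 2 = 1)%g -> (t \in 'Z(G))%g.
Proof.
move=> nz2 ffG perfG Gt t2.
have [c rGt] : exists c, rG t = c%:M.
  apply: det1_involution_scalar; rewrite // ?repr_det_der1 ?perfG //.
  by rewrite -repr_mxM // -[(t * t)%g]/(t ^+ 2)%g t2 repr_mx1.
apply/centerP; split => // g Gg; apply: (mx_faithful_inj ffG); rewrite ?groupM //.
by rewrite !repr_mxM // rGt scalar_mxC.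
Qed.

End FaithfulRepresentations.

Lemma mx_faithful_dim2_card (F : finFieldType) (gT : finGroupType) (G : {group gT})
    (rG : mx_representation F G 2) :
  mx_faithful rG -> (#|G| <= #|F| * #|F|.-1 ^ 2 * #|F|.+1)%N.
Proof.
move=> ffG; rewrite -(card_in_imset (mx_faithful_inj ffG)) -card_GL_2 cardsT card_sub.
by apply: subset_leq_card; apply/subsetP => _ /imsetP[g Gg ->]; rewrite inE repr_mx_unit.
Qed.

Section SimpleGroups.
Local Open Scope group_scope.
Variables (gT : finGroupType) (G : {group gT}).

Lemma simple_solvable_abelian : simple G -> solvable G -> abelian G.
Proof. by move=> simG /simple_sol_prime/(_ simG)/prime_cyclic/cyclic_abelian. Qed.

Lemma simple_card_le6_abelian : simple G -> (#|G| <= 6)%N -> abelian G.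
Proof.
move=> simG leG6; apply: simple_solvable_abelian => //; apply: Burnside_p_a_q_b.
by case: #|G| leG6 => [|[|[|[|[|[|[|]]]]]]].
Qed.

Lemma simple_abelian_or_perfect : simple G -> abelian G \/ G^`(1) = G.
Proof.
move=> simG; have [_ /(_ _ (der_normal 1 G))[G'1 | ]] := simpleP _ simG.
  by left; apply/derG1P.
by right.
Qed.

Lemma simple_center_abelian t : simple G -> t \in 'Z(G) -> t != 1 -> abelian G.
Proof.
move=> simG Zt ntt; have [_ /(_ _ (center_normal G))[Z1 | ZG]] := simpleP _ simG.
  by move: Zt; rewrite Z1 => /set1P/eqP; rewrite (negbTE ntt).
by rewrite -ZG center_abelian.
Qed.

End SimpleGroups.

Lemma simple_Fp_repr_dim_le2_involution_abelian p n (gT : finGroupType)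
    (G : {group gT}) (rG : mx_representation 'F_p G n.+1) t :
    prime p -> (n < 2)%N -> mx_faithful rG -> simple G ->
  t \in G -> #[t]%g = 2 -> abelian G.
Proof.
move=> p_pr; case: n rG => [|[|//]] rG _ ffG simG Gt ot.
  exact: mx_faithful_dim1_abelian ffG.
have [p2 | p_neq2] := eqVneq p 2.
  apply: simple_card_le6_abelian => //; apply: leq_trans (mx_faithful_dim2_card ffG) _.
  by rewrite card_Fp // p2.
have [// | perfG] := simple_abelian_or_perfect simG.
apply: (simple_center_abelian simG (perfect_repr2_involution_center _ ffG perfG Gt _)).
- by rewrite -(dvdn_pcharf (pchar_Fp p_pr)) dvdn_prime2.
- by rewrite -ot expg_order.
- by rewrite -order_eq1 ot.
Qed.

Section TwoGenerated.
Local Open Scope group_scope.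

Lemma morphim_gen2 (aT rT : finGroupType) (D : {group aT})
    (f : {morphism D >-> rT}) x y :
  x \in D -> y \in D -> f @* <<[set x; y]>> = <<[set f x; f y]>>.
Proof.
by move=> Dx Dy; rewrite morphim_gen ?morphimU ?morphim_set1 // subUset !sub1set Dx.
Qed.

Variable gT : finGroupType.

Lemma card_gen2_commute (u v : gT) :
  commute u v -> (#|<<[set u; v]>>| <= #[u] * #[v])%N.
Proof.
move=> cuv; have cuv_cycles : commute <[u]> <[v]>.
  apply: centC; rewrite cycle_subG; apply/centP => _ /cycleP[k ->].
  exact: commuteX.
have sub_mul : <<[set u; v]>> \subset <[u]> * <[v]>.
  by rewrite -comm_joingE // genS // setUSS // sub1set cycle_id.
apply: leq_trans (subset_leq_card sub_mul) _.
by rewrite !orderE mul_cardG leq_pmulr ?cardG_gt0.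
Qed.

Lemma abelem_gen2_logn_le2 p (V : {group gT}) u v :
  prime p -> p.-abelem V -> V :=: <<[set u; v]>> -> (logn p #|V| <= 2)%N.
Proof.
move=> p_pr abelV defV; have /(abelemP p_pr)[abV expV] := abelV.
have Vu : u \in V by rewrite defV mem_gen // !inE eqxx.
have Vv : v \in V by rewrite defV mem_gen // !inE eqxx orbT.
have order_le w : w \in V -> (#[w] <= p)%N.
  by move=> Vw; rewrite dvdn_leq ?prime_gt0 // order_dvdn expV.
rewrite -(leq_exp2l _ _ (prime_gt1 p_pr)) -card_pgroup ?(abelem_pgroup abelV) //.
rewrite defV -mulnn; apply: leq_trans (card_gen2_commute (centsP abV u Vu v Vv)) _.
exact: leq_mul (order_le u Vu) (order_le v Vv).
Qed.

End TwoGenerated.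

Section FrattiniQuotient.
Local Open Scope group_scope.
Variables (gT : finGroupType) (p : nat) (P : {group gT}).
Hypothesis pP : p.-group P.

Lemma coprime_cent_Phi (C : {group gT}) :
    C \subset 'N(P) -> coprime #|P| #|C| -> [~: P, C] \subset 'Phi(P) ->
  C \subset 'C(P).
Proof.
move=> nPC coPC sRPhi.
have nPhiC : C \subset 'N('Phi(P)) := char_norm_trans (Phi_char P) nPC.
have nPhiP : P \subset 'N('Phi(P)) := normal_norm (Phi_normal P).
have coPhiC : coprime #|'Phi(P)| #|C| := coprimeSg (Phi_sub P) coPC.
have solPhi : solvable 'Phi(P) := pgroup_sol (pgroupS (Phi_sub P) pP).
have := coprime_norm_quotient_cent nPC nPhiC coPhiC solPhi.
rewrite (setIidPl (quotient_cents2r sRPhi)) => defPbar.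
have sP_PhiC : P \subset 'Phi(P) * 'C_P(C).
  by rewrite -quotientSK // -defPbar.
have defP : 'Phi(P) <*> 'C_P(C) = P.
  apply/eqP; rewrite eqEsubset join_subG Phi_sub subsetIl /=.
  exact: subset_trans sP_PhiC (mul_subG (joing_subl _ _) (joing_subr _ _)).
by rewrite centsC -(Phi_nongen defP) genGid subsetIr.
Qed.

Lemma pgroup_cent_Phi_quotient (A : {group gT}) :
  A \subset 'N(P) -> 'C_A(P) = 1 -> [~: P, A] \subset 'Phi(P) -> p.-group A.
Proof.
move=> nPA cAP sRPhi; apply/pgroupP => q q_pr qA; apply: contraT => q_neq_p.
have [a Aa oa] := Cauchy q_pr qA.
have sCA : <[a]> \subset A by rewrite cycle_subG.
have cPa : <[a]> \subset 'C(P).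
  apply: coprime_cent_Phi (subset_trans sCA nPA) _ (subset_trans (commgS P sCA) sRPhi).
  by rewrite -orderE oa (pnat_coprime pP) // pnatE.
have : a \in 'C_A(P) by rewrite inE Aa -cycle_subG.
by rewrite cAP => /set1P a1; move: q_pr; rewrite -oa a1 order1.
Qed.

Lemma logn_Phi_quotient_gen2 x y :
  prime p -> P :=: <<[set x; y]>> -> (logn p #|P / 'Phi(P)| <= 2)%N.
Proof.
move=> p_pr defP; have nPhiP := normal_norm (Phi_normal P).
have Nx : x \in 'N('Phi(P)) by rewrite (subsetP nPhiP) // defP mem_gen // !inE eqxx.
have Ny : y \in 'N('Phi(P)) by rewrite (subsetP nPhiP) // defP mem_gen // !inE eqxx orbT.
apply: (abelem_gen2_logn_le2 (u := coset _ x) (v := coset _ y) p_pr).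
  exact: Phi_quotient_abelem.
by rewrite /quotient -morphim_gen2 // -defP.
Qed.

End FrattiniQuotient.

Section InternalAction.
Local Open Scope group_scope.
Variables (gT : finGroupType) (p : nat) (P A : {group gT}).
Hypotheses (p_pr : prime p) (pP : p.-group P).
Hypotheses (nPA : A \subset 'N(P)) (tiAP : A :&: P = 1) (cAP : 'C_A(P) = 1).
Hypothesis simA : simple A.

Let nPhiA : A \subset 'N('Phi(P)) := char_norm_trans (Phi_char P) nPA.

Let tiPhiA : 'Phi(P) :&: A = 1.
Proof. by apply/trivgP; rewrite -tiAP setIC; apply: setSI (Phi_sub P). Qed.

Let isoA := quotient_isom nPhiA tiPhiA.
Let isogA := quotient_isog nPhiA tiPhiA.

Lemma Phi_quotient_faithful :
  ~~ abelian A -> 'C_(A / 'Phi(P))(P / 'Phi(P)) = 1.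
Proof.
move=> nabA; have simAbar : simple (A / 'Phi(P)).
  by rewrite -(isog_simple isogA).
have nsK := subcent_normal (A / 'Phi(P)) (P / 'Phi(P)).
rewrite (setIidPl (quotient_norms _ nPA)) in nsK.
have [_ /(_ _ nsK)[// | K_Abar]] := simpleP _ simAbar.
have : [~: P, A] \subset 'Phi(P).
  rewrite commGC -(quotient_cents2 nPhiA (normal_norm (Phi_normal P))).
  by rewrite -K_Abar subsetIr.
move/(pgroup_cent_Phi_quotient pP nPA cAP)/pgroup_sol.
by move/(simple_solvable_abelian simA); rewrite (negbTE nabA).
Qed.

Lemma simple_involution_gen2_abelian x y t :
  P :=: <<[set x; y]>> -> t \in A -> #[t] = 2 -> abelian A.
Proof.
move=> defP At ot; apply: contraT => nabA; case/negP: (nabA).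
rewrite (isog_abelian isogA).
have abelV := Phi_quotient_abelem pP.
have ntV : P / 'Phi(P) != 1.
  have [ntA _] := simpleP _ simA; apply: contraNneq ntA => V1.
  have := Phi_quotient_faithful nabA; rewrite V1 (setIidPl (cents1 _)) => Abar1.
  by rewrite trivg_card1 (isom_card isoA) /= Abar1 cards1.
have ffA := abelem_mx_faithful abelV ntV (quotient_norms _ nPA) (Phi_quotient_faithful nabA).
apply: (simple_Fp_repr_dim_le2_involution_abelian p_pr _ ffA).
- by have := logn_Phi_quotient_gen2 pP p_pr defP; rewrite -(dim_abelemE abelV ntV).
- by rewrite -(isog_simple isogA).
- exact: mem_quotient At.
- by rewrite -ot -(order_injm (isom_inj isoA) At).
Qed.

End InternalAction.

Section AutAction.
Local Open Scope group_scope.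

Lemma Aut_simple_involution_gen2_abelian p (gT : finGroupType) (P : {group gT})
    (A : {group {perm gT}}) x y t :
    prime p -> p.-group P -> P :=: <<[set x; y]>> -> A \subset Aut P ->
  simple A -> t \in A -> #[t] = 2 -> abelian A.
Proof.
move=> p_pr pP defP AutA simA At ot.
pose to := [Aut P]%gact; pose s1 := sdpair1 to; pose s2 := sdpair2 to.
have inj2 : 'injm s2 := injm_sdpair2 to.
have DA := subsetP AutA.
have Px : x \in P by rewrite defP mem_gen // !inE eqxx.
have Py : y \in P by rewrite defP mem_gen // !inE eqxx orbT.
rewrite -(injm_abelian inj2 AutA).
apply: (@simple_involution_gen2_abelian _ p (s1 @* P) _ p_pr _ _ _ _ _ (s1 x) (s1 y) (s2 t)).
- exact: morphim_pgroup.
- exact: subset_trans (morphimS s2 AutA) (im_sdpair_norm to).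
- apply/trivgP; rewrite -(im_sdpair_TI to) subsetI subsetIr /=.
  exact: subset_trans (subsetIl _ _) (morphimS _ AutA).
- apply/trivgP/subsetP => _ /setIP[/morphimP[a Da Aa ->] ca].
  suff -> : a = 1 by rewrite morph1 inE.
  apply: (eq_Aut (DA _ Aa) (group1 _)) => z Pz.
  rewrite perm1; apply: (injmP (injm_sdpair1 to)); rewrite ?Aut_closed ?DA //.
  have := sdpair_act to Pz Da; rewrite /= => ->.
  by apply/conjg_fixP/commgP/esym/(centP ca); apply: mem_morphim.
- by rewrite -(isog_simple (sub_isog AutA inj2)).
- by rewrite -morphim_gen2 // -defP.
- by rewrite mem_morphim ?DA.
- by rewrite order_injm ?DA.
Qed.

End AutAction.

Section PSL2Involution.
Local Open Scope ring_scope.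
Variable F : finFieldType.

Lemma PSL2_involution : exists2 t, t \in PSL2 F & #[t]%g = 2%N.
Proof.
pose w : 'M[F]_2 := \matrix_(i, j) (if i == j then 0 else if i == 0 then 1 else -1).
pose u : 'M[F]_2 := \matrix_(i, j) (if (i == 1) && (j == 0) then 0 else 1).
have det_w : \det w = 1 by rewrite det_mx2 !mxE /= mul0r mul1r opprK add0r.
have det_u : \det u = 1 by rewrite det_mx2 !mxE /= mulr1 mulr0 subr0.
have unit_w : w \in unitmx by rewrite unitmxE det_w unitr1.
have unit_u : u \in unitmx by rewrite unitmxE det_u unitr1.
pose gw : {'GL_2[F]} := FinRing.Unit unit_w.
pose gu : {'GL_2[F]} := FinRing.Unit unit_u.
have SL2w : gw \in SL2 F by rewrite inE; apply/eqP.
have SL2u : gu \in SL2 F by rewrite inE; apply/eqP.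
have ww : w *m w = (-1)%:M.
  apply/matrixP => i j; rewrite mulmx2E !mxE.
  by case: (ord2_cases i) => ->; case: (ord2_cases j) => -> /=;
    rewrite ?mulr0 ?mul0r ?add0r ?addr0 ?mulr1 ?mul1r ?mulrN1 ?mulN1r ?mulr1n ?mulr0n.
have wu_uw : (w *m u) 0 0 != (u *m w) 0 0.
  by rewrite !mulmx2E !mxE /= mulr1 mulr0 addr0 mul1r add0r eq_sym oppr_eq0 oner_eq0.
set Z := ('Z(SL2 F))%g.
have Nw : (gw \in 'N(Z))%g by rewrite (subsetP (normal_norm (center_normal _))).
have Z_ww : (gw * gw)%g \in Z.
  apply/centerP; split=> [|g _]; first by rewrite groupM.
  by apply: val_inj; rewrite /= -!mulmxE ww scalar_mxC.
have notZ_w : gw \notin Z.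
  apply/negP => /centerP[_ /(_ gu SL2u) /(congr1 val)/=].
  by rewrite -!mulmxE => wu; rewrite wu eqxx in wu_uw.
exists (coset Z gw); first exact: mem_quotient.
apply: nt_prime_order => //; first by rewrite -morphX //; apply: coset_id.
by apply: contra notZ_w => /eqP; apply: coset_idr.
Qed.

End PSL2Involution.

Local Open Scope group_scope.

Theorem lemma3p6 (p : nat) (gT : finGroupType) (P : {group gT})
    (F : finFieldType)
    (phi : {morphism PSL2 F >-> {perm gT}}) :
  prime p -> p.-group P ->
  (exists x y : gT, P = <<[set x; y]>>%g :> {set gT}) ->
  simple (PSL2 F) -> ~~ abelian (PSL2 F) ->
  (phi @* PSL2 F \subset Aut P)%g ->
  (forall g, g \in PSL2 F -> forall x, x \in P -> phi g x = x).
Proof.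
move=> p_pr pP [x [y defP]] simPSL nabPSL AutPSL g PSLg z Pz.
have [_ /(_ _ (ker_normal phi))[ker1 | kerPSL]] := simpleP _ simPSL; last first.
  by rewrite (mker (_ : g \in 'ker phi)) ?perm1 ?kerPSL.
have injphi : 'injm phi by rewrite ker1.
have [t PSLt ot] := PSL2_involution F.
case/negP: nabPSL; rewrite -(injm_abelian injphi) //.
apply: (Aut_simple_involution_gen2_abelian p_pr pP defP AutPSL _ (mem_morphim phi PSLt PSLt)).
  by rewrite -(isog_simple (sub_isog (subxx _) injphi)).
by rewrite order_injm.
Qed.
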